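(* Fix two positive integers $b$ and $k$. Then the proportion of points $(r,s)\in\mathbb{N}\times\mathbb{N}$ with $\gcd_b(r,s)=k$ is $\dfrac{1}{k^{b+1}\zeta(b+1)}$; that is, \[ \lim_{N\to\infty}\frac{|\{(r,s): 0<r,s\le N,\ \gcd_b(r,s)=k\}|}{N^2}=\frac{1}{k^{b+1}\zeta(b+1)}, \] where $\zeta$ is the Riemann zeta function.
   Context: For $b\in\mathbb{N}$ and $r,s\in\mathbb{N}$, $\gcd_b(r,s)=\max\{k\in\mathbb{N} : k\mid r \text{ and } k^b\mid s\}$. *)

From Stdlib Require Import Reals Lra Lia Arith List.
From Coquelicot Require Import Coquelicot.
Open Scope R_scope.

Definition divb (d n : nat) : bool :=
  match d with
  | O => Nat.eqb n 0
  | S _ => Nat.eqb (n mod d) 0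
  end.

(* gcd_b(r,s) = max { k in N : k | r and k^b | s }.
   For r > 0 every divisor of r lies in 1..r, so the maximum is the largest
   k in 1..r with k | r and k^b | s (k = 1 always qualifies). *)
Definition gcd_b (b r s : nat) : nat :=
  fold_left Nat.max
    (filter (fun k => andb (divb k r) (divb (k ^ b) s)) (seq 1 r)) 0%nat.

Definition count_gcd_b (b k N : nat) : nat :=
  length (filter (fun p : nat * nat => Nat.eqb (gcd_b b (fst p) (snd p)) k)
            (list_prod (seq 1 N) (seq 1 N))).

Definition zeta (s : R) : R := Series (fun n : nat => / Rpower (INR (S n)) s).

(* Every divisor of gcd_b(r,s) is an m with m | r and m^b | s, and conversely, since
   this set is closed under lcm.  Moebius inversion over the divisors of gcd_b(r,s)
   therefore gives
     #{(r,s) in [1,N]^2 : gcd_b(r,s) = k} = sum_(j <= N) mu(j) [N/kj] [N/(kj)^b].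
   Divided by N^2, the j-th term tends to mu(j)/(kj)^(b+1) and is bounded by 1/j^2,
   so Tannery's theorem gives the limit S/k^(b+1) with S = sum_j mu(j)/j^(b+1).
   As every pair has its gcd_b in [1,N], these densities sum to 1 over k, and a
   second application of Tannery's theorem yields S * zeta(b+1) = 1. *)

From Stdlib Require Import Reals Lra Lia.
From Coquelicot Require Import Coquelicot.
From HB Require Import structures.
From mathcomp Require Import ssreflect ssrfun ssrbool eqtype ssrnat seq div prime bigop.
From mathcomp Require Import zify.
Set Implicit Arguments. Unset Strict Implicit. Unset Printing Implicit Defensive.
Open Scope nat_scope.

Lemma Nat_powE m n : Nat.pow m n = m ^ n.
Proof. by elim: n => //= n ->; rewrite expnS. Qed.

Lemma divbE d n : divb d n = (d %| n).
Proof.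
case: d => [|d]; first by rewrite dvd0n; case: n.
change (Nat.eqb (n mod d.+1) 0 = (d.+1 %| n)).
apply/(PeanoNat.Nat.eqb_spec _ 0)/dvdnP.
  by move=> /PeanoNat.Nat.Lcm0.mod_divide [c ->]; exists c.
by move=> [c ->]; apply/PeanoNat.Nat.Lcm0.mod_divide; exists c.
Qed.

Lemma seqE m n : List.seq m n = iota m n.
Proof. by elim: n m => //= n IH m; rewrite IH. Qed.

Lemma filterE T (a : pred T) s : List.filter a s = filter a s.
Proof. by elim: s => //= x s ->. Qed.

Lemma lengthE T (s : seq T) : length s = size s.
Proof. by elim: s => //= x s ->. Qed.

Lemma list_prodE (S T : Type) (s : seq S) (t : seq T) :
  List.list_prod s t = [seq (x, y) | x <- s, y <- t].
Proof.
elim: s => //= x s ->.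
by congr (_ ++ _); elim: t => //= y t <-.
Qed.

Lemma mem_iota1 N r : (r \in iota 1 N) = (0 < r <= N).
Proof. by rewrite mem_iota add1n ltnS. Qed.

Lemma fold_left_maxE s a : List.fold_left Nat.max s a = maxn a (\max_(x <- s) x).
Proof.
elim: s a => [|x s IH] a /=; first by rewrite big_nil maxn0.
by rewrite IH big_cons maxnA; congr maxn; lia.
Qed.

Lemma dvdn_expn_lcm k m n s : m ^ k %| s -> n ^ k %| s -> lcmn m n ^ k %| s.
Proof.
have [-> | m_gt0] := posnP m; first by rewrite lcm0n.
have [-> | n_gt0] := posnP n; first by rewrite lcmn0.
set d := gcdn m n; have d_gt0 : 0 < d by rewrite gcdn_gt0 m_gt0.
have [m' def_m] : exists m', m = m' * d by apply/dvdnP; apply: dvdn_gcdl.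
have [n' def_n] : exists n', n = n' * d by apply/dvdnP; apply: dvdn_gcdr.
have co_mn' : coprime m' n'.
  by rewrite /coprime -(eqn_pmul2r d_gt0) mul1n muln_gcdl -def_m -def_n.
have -> : lcmn m n = m' * n' * d.
  by rewrite /lcmn -/d {1}def_m {1}def_n mulnA mulnK // mulnAC.
have dk_gt0 : 0 < d ^ k by rewrite expn_gt0 d_gt0.
move=> dv_mks dv_nks; have [u def_s] : exists u, s = u * d ^ k.
  by apply/dvdnP; apply: dvdn_trans dv_mks; rewrite dvdn_exp2r // def_m dvdn_mull.
move: dv_mks dv_nks; rewrite def_s def_m def_n !expnMn !dvdn_pmul2r // => dv_m'u dv_n'u.
by rewrite Gauss_dvd ?dv_m'u ?dv_n'u // coprimeXl // coprimeXr.
Qed.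

Section GcdB.
Variables (b r s : nat).
Hypothesis r_gt0 : 0 < r.

Lemma gcd_bE : gcd_b b r s = \max_(k <- iota 1 r | (k %| r) && (k ^ b %| s)) k.
Proof.
rewrite /gcd_b fold_left_maxE max0n seqE filterE big_filter.
by apply: eq_bigl => k; rewrite !divbE Nat_powE.
Qed.

Lemma leq_gcd_b k : 0 < k -> k %| r -> k ^ b %| s -> k <= gcd_b b r s.
Proof.
move=> k_gt0 dv_kr dv_kbs; rewrite gcd_bE leq_bigmax_seq ?dv_kr ?dv_kbs //.
by rewrite mem_iota1 k_gt0 dvdn_leq.
Qed.

Lemma gcd_b_gt0 : 0 < gcd_b b r s.
Proof. by apply: leq_gcd_b; rewrite ?dvd1n ?exp1n. Qed.

Lemma gcd_b_dvdn : (gcd_b b r s %| r) && (gcd_b b r s ^ b %| s).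
Proof.
move: gcd_b_gt0; rewrite gcd_bE; apply/implyP.
apply: (big_ind (fun x => (0 < x) ==> (x %| r) && (x ^ b %| s))) => // [x y | k ->].
  by case: (leqP x y).
exact: implybT.
Qed.

Lemma gcd_b_leq : gcd_b b r s <= r.
Proof. by rewrite dvdn_leq //; case/andP: gcd_b_dvdn. Qed.

Lemma dvdn_gcd_b m : (m %| gcd_b b r s) = (m %| r) && (m ^ b %| s).
Proof.
have /andP [dv_gr dv_gbs] := gcd_b_dvdn.
apply/idP/andP => [dv_mg | [dv_mr dv_mbs]].
  by rewrite (dvdn_trans dv_mg dv_gr) (dvdn_trans (dvdn_exp2r b dv_mg) dv_gbs).
set g := gcd_b b r s in dv_gr dv_gbs *.
have l_gt0 : 0 < lcmn m g by rewrite lcmn_gt0 (dvdn_gt0 r_gt0 dv_mr) gcd_b_gt0.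
have le_lg : lcmn m g <= g.
  by rewrite leq_gcd_b // ?dvdn_lcm ?dv_mr // dvdn_expn_lcm.
have <- : lcmn m g = g.
  by apply: anti_leq; rewrite le_lg dvdn_leq ?dvdn_lcmr ?gcd_b_gt0.
by rewrite dvdn_lcml.
Qed.
End GcdB.

Lemma sum_nat_count T (a : pred T) s : \sum_(x <- s) a x = count a s.
Proof. by rewrite -sumn_count sumnE big_map. Qed.

Lemma count_dvdn_iota N m : 0 < m -> count (dvdn m) (iota 1 N) = N %/ m.
Proof.
move=> m_gt0; elim: N => [|N IHN]; first by rewrite div0n.
by rewrite -[N.+1]addn1 iotaD count_cat IHN /= add1n addn1 divnS // addn0 addnC.
Qed.

Lemma count_gcd_bE b k N :
  count_gcd_b b k N = \sum_(r <- iota 1 N) \sum_(s <- iota 1 N) (gcd_b b r s == k).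
Proof.
rewrite /count_gcd_b lengthE filterE list_prodE !seqE size_filter -sum_nat_count.
rewrite big_allpairs; apply: eq_bigr => r _; apply: eq_bigr => s _ /=.
by case: PeanoNat.Nat.eqb_spec => [->|/eqP/negbTE ->]; rewrite ?eqxx.
Qed.

Lemma count_gcd_b_le b k N : 0 < k -> count_gcd_b b k N <= (N %/ k) * (N %/ k ^ b).
Proof.
move=> k_gt0; rewrite count_gcd_bE -!count_dvdn_iota ?expn_gt0 ?k_gt0 // -!sum_nat_count.
rewrite big_distrl big_seq [X in _ <= X]big_seq; apply: leq_sum => r.
rewrite mem_iota1 => /andP [r_gt0 _]; rewrite big_distrr; apply: leq_sum => s _ /=.
by case: eqP => // <-; case/andP: (gcd_b_dvdn b s r_gt0) => -> ->.
Qed.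

Lemma sum_count_gcd_b b N : \sum_(k <- iota 1 N) count_gcd_b b k N = N * N.
Proof.
under eq_bigr do rewrite count_gcd_bE.
rewrite exchange_big -[N in N * _](size_iota 1 N) -sum1_size big_distrl /=.
rewrite big_seq [RHS]big_seq; apply: eq_bigr => r; rewrite mem_iota1 => /andP [r_gt0 le_rN].
rewrite exchange_big mul1n -[RHS](size_iota 1 N) -sum1_size; apply: eq_bigr => s _.
rewrite sum_nat_count (eq_count (a2 := pred1 (gcd_b b r s))) => [|k]; last by rewrite /= eq_sym.
by rewrite count_uniq_mem ?iota_uniq // mem_iota1 gcd_b_gt0 // (leq_trans (gcd_b_leq _ _ _)).
Qed.

Section BigDivisors.
Variables (T : Type) (idx : T) (op : Monoid.com_law idx).

Lemma big_divisors_primeM (F : nat -> T) p n : prime p -> 0 < n ->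
  \big[op/idx]_(d <- divisors (p * n)) F d =
  op (\big[op/idx]_(e <- divisors n) F (p * e))
     (\big[op/idx]_(e <- divisors n | ~~ (p %| e)) F e).
Proof.
move=> p_pr n_gt0; have p_gt0 := prime_gt0 p_pr.
have pn_gt0 : 0 < p * n by rewrite muln_gt0 p_gt0.
rewrite (bigID (fun d => p %| d)); congr (op _ _).
  rewrite -big_filter -(big_map (muln p) xpredT); apply: perm_big.
  apply: uniq_perm; rewrite ?filter_uniq ?map_inj_uniq ?divisors_uniq //.
    by move=> u v /eqP; rewrite eqn_pmul2l // => /eqP.
  move=> d; rewrite mem_filter -dvdn_divisors //; apply/andP/mapP => [[]|[e]].
    move=> /dvdnP [e ->]; rewrite mulnC dvdn_pmul2l // => dv_en.
    by exists e; rewrite // -dvdn_divisors.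
  by rewrite -dvdn_divisors // => dv_en ->; rewrite dvdn_mulr // dvdn_pmul2l.
rewrite -big_filter -[RHS]big_filter; apply: perm_big.
apply: uniq_perm; rewrite ?filter_uniq ?divisors_uniq //.
move=> d; rewrite !mem_filter -!dvdn_divisors //; case: (boolP (p %| d)) => //= p'd.
by rewrite Gauss_dvdr // coprime_sym prime_coprime.
Qed.
End BigDivisors.

Open Scope R_scope.

Lemma RplusA : associative Rplus.
Proof. by move=> x y z; rewrite Rplus_assoc. Qed.

Lemma RmultA : associative Rmult.
Proof. by move=> x y z; rewrite Rmult_assoc. Qed.

HB.instance Definition _ := Monoid.isComLaw.Build R 0 Rplus RplusA Rplus_comm Rplus_0_l.
HB.instance Definition _ := Monoid.isComLaw.Build R 1 Rmult RmultA Rmult_comm Rmult_1_l.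
HB.instance Definition _ := Monoid.isMulLaw.Build R 0 Rmult Rmult_0_l Rmult_0_r.
HB.instance Definition _ :=
  Monoid.isAddLaw.Build R Rmult Rplus Rmult_plus_distr_r Rmult_plus_distr_l.

Definition moebius (n : nat) : R :=
  \big[Rmult/1]_(p <- primes n) (if logn p n == 1%N then -1 else 0).

Lemma moebius1 : moebius 1 = 1.
Proof. by rewrite /moebius big_nil. Qed.

Lemma Rabs_moebius_le1 n : Rabs (moebius n) <= 1.
Proof.
apply: (big_ind (fun x => Rabs x <= 1)) => [|x y|p _].
- by rewrite Rabs_R1; lra.
- by rewrite Rabs_mult; have := Rabs_pos x; have := Rabs_pos y; nra.
- by case: ifP; rewrite ?Rabs_Ropp ?Rabs_R1 ?Rabs_R0; lra.
Qed.

Lemma moebius_primeM p n : prime p -> (0 < n)%N -> ~~ (p %| n) ->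
  moebius (p * n) = - moebius n.
Proof.
move=> p_pr n_gt0 p'n; have p_gt0 := prime_gt0 p_pr.
have primes_pn : perm_eq (primes (p * n)) (p :: primes n).
  apply: uniq_perm; rewrite /= ?primes_uniq ?mem_primes ?(negbTE p'n) ?andbF //.
  by move=> q; rewrite primesM // primes_prime // inE.
rewrite /moebius (perm_big _ primes_pn) big_cons lognM // logn_prime // eqxx.
rewrite logn_coprime ?prime_coprime //= Ropp_mult_distr_l_reverse Rmult_1_l.
congr (- _); apply: eq_big_seq => q; rewrite mem_primes => /and3P [q_pr _ dv_qn].
have q_neq_p : (q == p) = false by apply: contraNF p'n => /eqP <-.
by rewrite lognM // logn_prime // q_neq_p.
Qed.

Lemma moebius_primeM_dvd p n : prime p -> (0 < n)%N -> p %| n -> moebius (p * n) = 0.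
Proof.
move=> p_pr n_gt0 dv_pn; have p_gt0 := prime_gt0 p_pr.
have p_primes : p \in primes (p * n) by rewrite mem_primes p_pr muln_gt0 p_gt0 n_gt0 dvdn_mulr.
rewrite /moebius (big_rem _ p_primes) lognM // logn_prime // eqxx.
have : (0 < logn p n)%N by rewrite logn_gt0 mem_primes p_pr n_gt0 dv_pn.
by case: (logn p n) => // k _; rewrite /= Rmult_0_l.
Qed.

Lemma big_Ropp (I : Type) (r : seq I) (P : pred I) (F : I -> R) :
  \big[Rplus/0]_(i <- r | P i) - F i = - \big[Rplus/0]_(i <- r | P i) F i.
Proof. by rewrite (big_morph Ropp (id1 := 0) (op1 := Rplus)) //; [move=> x y|]; lra. Qed.

Lemma sum_moebius_divisors n : (0 < n)%N ->
  \big[Rplus/0]_(d <- divisors n) moebius d = INR (n == 1%N).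
Proof.
move=> n_gt0; have [|n_gt1|->] := ltngtP n 1; first by rewrite ltnNge n_gt0.
  2: by rewrite /= big_cons big_nil moebius1 Rplus_0_r.
have p_pr := pdiv_prime n_gt1; set p := pdiv n in p_pr.
have [m def_n] : exists m, n = (p * m)%N by exists (n %/ p); rewrite mulnC divnK // pdiv_dvd.
have m_gt0 : (0 < m)%N by move: n_gt0; rewrite def_n muln_gt0 => /andP [].
have dvd_gt0 e : e \in divisors m -> (0 < e)%N.
  by rewrite -dvdn_divisors // => /dvdn_gt0; apply.
rewrite /= def_n big_divisors_primeM // (bigID (fun e => p %| e)) /=.
rewrite big1_seq => [|e /andP [dv_pe /dvd_gt0 e_gt0]]; last exact: moebius_primeM_dvd.
suff -> : \big[Rplus/0]_(e <- divisors m | ~~ (p %| e)) moebius (p * e) =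
          - \big[Rplus/0]_(e <- divisors m | ~~ (p %| e)) moebius e by lra.
rewrite -big_Ropp big_seq_cond [RHS]big_seq_cond.
by apply: eq_bigr => e /andP [/dvd_gt0 e_gt0 p'e]; apply: moebius_primeM.
Qed.

Lemma sum_moebius_dvdn N n : (0 < n <= N)%N ->
  \big[Rplus/0]_(j <- iota 1 N | j %| n) moebius j = INR (n == 1%N).
Proof.
move=> /andP [n_gt0 le_nN]; rewrite -big_filter -(sum_moebius_divisors n_gt0).
apply: perm_big; apply: uniq_perm; rewrite ?filter_uniq ?iota_uniq ?divisors_uniq //.
move=> d; rewrite mem_filter mem_iota1 -dvdn_divisors // andbC.
case: (boolP (d %| n)) => [dv_dn|]; rewrite ?andbF // andbT (dvdn_gt0 n_gt0 dv_dn).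
exact: leq_trans (dvdn_leq n_gt0 dv_dn) le_nN.
Qed.

Lemma INR_eqn_sum_moebius N k g : (0 < k)%N -> (0 < g <= N)%N ->
  INR (g == k) = \big[Rplus/0]_(j <- iota 1 N) (moebius j * INR ((k * j)%N %| g)).
Proof.
move=> k_gt0 /andP [g_gt0 le_gN].
have -> : \big[Rplus/0]_(j <- iota 1 N) (moebius j * INR ((k * j)%N %| g))
        = \big[Rplus/0]_(j <- iota 1 N | (k * j)%N %| g) moebius j.
  by rewrite [RHS]big_mkcond; apply: eq_bigr => j _; case: ifP => _ /=; lra.
have [/dvdnP [h def_g] | k'g] := boolP (k %| g); last first.
  rewrite big_pred0 => [|j]; last by apply: contraNF k'g; apply: dvdn_trans (dvdn_mulr _ _).
  by case: eqP k'g => // ->; rewrite dvdnn.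
have h_gt0 : (0 < h)%N by move: g_gt0; rewrite def_g muln_gt0 => /andP [].
rewrite (eq_bigl (fun j => j %| h)) => [|j]; last by rewrite def_g [(h * k)%N]mulnC dvdn_pmul2l.
rewrite sum_moebius_dvdn; last by rewrite h_gt0 (leq_trans _ le_gN) // def_g leq_pmulr.
by rewrite def_g -{2}(mul1n k) eqn_pmul2r.
Qed.

Lemma INR_sum (I : Type) (r : seq I) (P : pred I) (F : I -> nat) :
  INR (\sum_(i <- r | P i) F i) = \big[Rplus/0]_(i <- r | P i) INR (F i).
Proof. exact: (big_morph INR plus_INR). Qed.

Lemma INR_gcd_b_eq_sum_moebius b k N r s : (0 < k)%N -> (0 < r <= N)%N ->
  INR (gcd_b b r s == k) = \big[Rplus/0]_(j <- iota 1 N)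
    (moebius j * (INR ((k * j)%N %| r) * INR ((k * j) ^ b %| s))).
Proof.
move=> k_gt0 /andP [r_gt0 le_rN].
rewrite (INR_eqn_sum_moebius (N := N) k_gt0); last first.
  by rewrite gcd_b_gt0 // (leq_trans (gcd_b_leq _ _ _)).
by apply: eq_bigr => j _; rewrite dvdn_gcd_b // -mulnb mult_INR.
Qed.

Lemma count_gcd_b_moebius b k N : (0 < k)%N ->
  INR (count_gcd_b b k N) = \big[Rplus/0]_(j <- iota 1 N)
    (moebius j * (INR (N %/ (k * j)) * INR (N %/ (k * j) ^ b))).
Proof.
move=> k_gt0; rewrite count_gcd_bE INR_sum big_seq.
under eq_bigr => r /[!mem_iota1] r_bd
  do rewrite INR_sum (eq_bigr _ (fun s _ => INR_gcd_b_eq_sum_moebius b s k_gt0 r_bd)).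
rewrite -big_seq; under eq_bigr do rewrite exchange_big.
rewrite exchange_big; apply: eq_big_seq => j; rewrite mem_iota1 => /andP [j_gt0 _].
have kj_gt0 : (0 < k * j)%N by rewrite muln_gt0 k_gt0.
rewrite -!count_dvdn_iota ?expn_gt0 ?kj_gt0 // -!sum_nat_count !INR_sum.
by rewrite big_distrl big_distrr; apply: eq_bigr => r _ /=; rewrite !big_distrr.
Qed.

Lemma big_Rle (I : Type) (r : seq I) (P : pred I) (F G : I -> R) :
  (forall i, P i -> F i <= G i) ->
  \big[Rplus/0]_(i <- r | P i) F i <= \big[Rplus/0]_(i <- r | P i) G i.
Proof. by move=> le_FG; apply: (big_ind2 Rle) => // *; [lra | exact: Rplus_le_compat]. Qed.

Lemma Rabs_big_le (I : Type) (r : seq I) (P : pred I) (F : I -> R) :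
  Rabs (\big[Rplus/0]_(i <- r | P i) F i) <= \big[Rplus/0]_(i <- r | P i) Rabs (F i).
Proof.
apply: (big_ind2 (fun x y => Rabs x <= y)) => [|x1 y1 x2 y2 le1 le2|i _].
- by rewrite Rabs_R0; lra.
- by have := Rabs_triang x1 x2; lra.
- exact: Rle_refl.
Qed.

Definition psum (a : nat -> R) (K : nat) : R := \big[Rplus/0]_(n <- iota 0 K) a n.

Lemma psum_split a J K : (J <= K)%N ->
  psum a K = psum a J + \big[Rplus/0]_(n <- iota J (K - J)) a n.
Proof. by move=> le_JK; rewrite /psum -{1}(subnKC le_JK) iotaD big_cat. Qed.

Lemma sum_n_psum a K : sum_n a K = psum a K.+1.
Proof.
elim: K => [|K IHK]; first by rewrite sum_O /psum big_cons big_nil Rplus_0_r.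
by rewrite sum_Sn IHK (psum_split a (leqnSn K.+1)) subSnn big_cons big_nil Rplus_0_r.
Qed.

Lemma is_lim_seq_psum a : ex_series a -> is_lim_seq (psum a) (Series a).
Proof.
move=> sum_a; apply/is_lim_seq_incr_1.
by apply: (is_lim_seq_ext (sum_n a)) => [K|]; [rewrite sum_n_psum | exact: Series_correct].
Qed.

Lemma is_lim_seq_big (I : Type) (r : seq I) (u : I -> nat -> R) (l : I -> R) :
  (forall i, is_lim_seq (u i) (l i)) ->
  is_lim_seq (fun N => \big[Rplus/0]_(i <- r) u i N) (\big[Rplus/0]_(i <- r) l i).
Proof.
move=> lim_u; elim: r => [|i r IHr].
  by rewrite big_nil; apply: (is_lim_seq_ext (fun _ => 0)) => [N|]; rewrite ?big_nil //;
     apply: is_lim_seq_const.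
rewrite big_cons; apply: (is_lim_seq_ext (fun N => u i N + \big[Rplus/0]_(j <- r) u j N)).
  by move=> N; rewrite big_cons.
exact: is_lim_seq_plus'.
Qed.

Section Dominated.
Variables (M : nat -> R).
Hypotheses (M_ge0 : forall n, 0 <= M n) (sum_M : ex_series M).

Lemma psum_le_Series K : psum M K <= Series M.
Proof.
apply: (is_lim_seq_le_loc (fun _ => psum M K) (psum M) (psum M K) (Series M)); last first.
- exact: is_lim_seq_psum.
- exact: is_lim_seq_const.
exists K => n /leP le_Kn; rewrite (psum_split M le_Kn).
have : 0 <= \big[Rplus/0]_(i <- iota K (n - K)) M i.
  by apply: (big_ind (Rle 0)) => // [|x y]; [lra | exact: Rplus_le_le_0_compat].
lra.
Qed.

Lemma big_iota_le_tail J K : \big[Rplus/0]_(n <- iota J K) M n <= Series M - psum M J.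
Proof.
have := psum_le_Series (J + K); rewrite (psum_split M (leq_addr K J)) addKn; lra.
Qed.

Lemma Rabs_Series_sub_psum a J : (forall n, Rabs (a n) <= M n) ->
  Rabs (Series a - psum a J) <= Series M - psum M J.
Proof.
move=> le_aM; have sum_a : ex_series a by apply: ex_series_le sum_M.
apply: (is_lim_seq_le_loc (fun K => Rabs (psum a K - psum a J)) (fun _ => Series M - psum M J)
  (Rabs (Series a - psum a J)) (Series M - psum M J)).
- exists J => K /leP le_JK; rewrite (psum_split a le_JK).
  have -> : psum a J + \big[Rplus/0]_(n <- iota J (K - J)) a n - psum a J =
            \big[Rplus/0]_(n <- iota J (K - J)) a n by ring.
  apply: Rle_trans (Rabs_big_le _ _ _) _; apply: Rle_trans (big_iota_le_tail J (K - J)).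
  exact: big_Rle.
- apply: (is_lim_seq_abs _ (Series a - psum a J)).
  exact: is_lim_seq_minus' (is_lim_seq_psum sum_a) (is_lim_seq_const _).
- exact: is_lim_seq_const.
Qed.

Lemma Series_sub_psum_lt eps : 0 < eps -> exists J, Series M - psum M J < eps.
Proof.
move=> eps_gt0; have lim_tail : is_lim_seq (fun J => Series M - psum M J) 0.
  rewrite -(Rminus_diag (Series M)).
  exact: is_lim_seq_minus' (is_lim_seq_const _) (is_lim_seq_psum sum_M).
have [J near_J] := proj2 (is_lim_seq_spec _ _) lim_tail (mkposreal _ eps_gt0).
by exists J; have := near_J J (le_n J); rewrite Rminus_0_r /=; move/Rabs_lt_between; lra.
Qed.

Theorem tannery (f : nat -> nat -> R) (a : nat -> R) :
  (forall n, is_lim_seq (fun N => f N n) (a n)) -> (forall N n, Rabs (f N n) <= M n) ->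
  is_lim_seq (fun N => psum (f N) N) (Series a).
Proof.
move=> lim_f le_fM.
have le_aM n : Rabs (a n) <= M n.
  apply: (is_lim_seq_le (fun N => Rabs (f N n)) (fun _ => M n) (Rabs (a n)) (M n)) => //.
    exact: (is_lim_seq_abs _ _ (lim_f n)).
  exact: is_lim_seq_const.
apply/is_lim_seq_spec => eps; have eps3_gt0 : 0 < eps / 3 by move: (cond_pos eps); lra.
have [J tail_small] := Series_sub_psum_lt eps3_gt0.
have lim_head := is_lim_seq_big (r := iota 0 J) lim_f.
have [N0 near_head] := proj2 (is_lim_seq_spec _ _) lim_head (mkposreal _ eps3_gt0).
exists (maxn J N0) => N /leP; rewrite geq_max => /andP [le_JN le_N0N].
have head_close := near_head N (elimT leP le_N0N).
rewrite /= -/(psum (f N) J) -/(psum a J) in head_close.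
have tail_f : Rabs (\big[Rplus/0]_(n <- iota J (N - J)) f N n) <= Series M - psum M J.
  apply: Rle_trans (Rabs_big_le _ _ _) _; apply: Rle_trans (big_iota_le_tail J (N - J)).
  exact: big_Rle.
have tail_a := Rabs_Series_sub_psum J le_aM.
rewrite (psum_split _ le_JN).
set x := psum (f N) J - psum a J in head_close *.
set y := \big[Rplus/0]_(n <- iota J (N - J)) f N n in tail_f *.
have -> : psum (f N) J + y - Series a = x + y + - (Series a - psum a J) by rewrite /x; ring.
have := Rabs_triang (x + y) (- (Series a - psum a J)); have := Rabs_triang x y.
rewrite Rabs_Ropp; lra.
Qed.

End Dominated.

Lemma big_iota1_psum (F : nat -> R) N :
  \big[Rplus/0]_(j <- iota 1 N) F j = psum (fun n => F n.+1) N.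
Proof. by rewrite /psum -[1%N]addn0 iotaDl big_map. Qed.

Definition mult_density (m N : nat) : R := INR (N %/ m) / INR N.

Lemma mult_density_bounds m N : (0 < m)%N -> 0 <= mult_density m N <= / INR m.
Proof.
move=> m_gt0; rewrite /mult_density.
have m_inv_pos : 0 < / INR m by apply/Rinv_0_lt_compat/lt_0_INR/ltP.
have [->|N_gt0] := posnP N; first by rewrite /= /Rdiv Rinv_0 Rmult_0_r; lra.
have N_pos : 0 < INR N by apply: lt_0_INR; apply/ltP.
have m_pos : 0 < INR m by apply/lt_0_INR/ltP.
have le_qmN : INR (N %/ m) * INR m <= INR N.
  by rewrite -mult_INR; apply/le_INR/leP/leq_trunc_div.
split; first by apply: Rdiv_le_0_compat => //; apply: pos_INR.
apply: (Rmult_le_reg_r (INR N * INR m)); first exact: Rmult_lt_0_compat.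
by rewrite /Rdiv -Rmult_assoc; field_simplify; lra.
Qed.

Lemma is_lim_seq_mult_density m : (0 < m)%N -> is_lim_seq (mult_density m) (/ INR m).
Proof.
move=> m_gt0; have m_pos : 0 < INR m by apply: lt_0_INR; apply/ltP.
have lim_inv : is_lim_seq (fun N => / INR m - / INR N) (/ INR m).
  have lim_inv_N : is_lim_seq (fun N => / INR N) 0 by exact: is_lim_seq_inv _ _ is_lim_seq_INR _.
  by have := is_lim_seq_minus' _ _ _ _ (is_lim_seq_const (/ INR m)) lim_inv_N; rewrite Rminus_0_r.
apply: (is_lim_seq_le_le_loc _ _ _ _ _ lim_inv (is_lim_seq_const _)).
exists 1%N => N /leP N_gt0; split; last by have [] := mult_density_bounds N m_gt0.
have N_pos : 0 < INR N by apply: lt_0_INR; lia.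
have lt_NqmSm : INR N < (INR (N %/ m) + 1) * INR m.
  by rewrite -S_INR -mult_INR; apply/lt_INR/ltP/ltn_ceil.
apply: (Rmult_le_reg_r (INR N * INR m)); first exact: Rmult_lt_0_compat.
by rewrite /mult_density /Rdiv; field_simplify; lra.
Qed.

Lemma inv_INR_sq_ge0 N : 0 <= / INR N ^ 2.
Proof.
case: N => [|N]; first by rewrite /= Rmult_0_l Rinv_0; lra.
by apply/Rlt_le/Rinv_0_lt_compat/pow_lt/lt_0_INR; lia.
Qed.

Lemma ex_series_inv_sq : ex_series (fun n => / INR n.+1 ^ 2).
Proof.
have telescope : is_lim_seq (sum_n (fun n => / INR n.+1 - / INR n.+2)) 1.
  apply: (is_lim_seq_ext (fun N => 1 - / INR N.+2)).
    elim=> [|N IHN]; first by rewrite sum_O /=; field.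
    by rewrite sum_Sn -IHN /plus /=; ring.
  have lim_inv : is_lim_seq (fun N => / INR N.+2) 0.
    apply/(is_lim_seq_incr_1 (fun N => / INR N.+1)).
    apply/(is_lim_seq_incr_1 (fun N => / INR N)).
    exact: is_lim_seq_inv _ _ is_lim_seq_INR _.
  by have := is_lim_seq_minus' _ _ _ _ (is_lim_seq_const 1) lim_inv; rewrite Rminus_0_r.
apply: (ex_series_le _ (fun n => 2 * (/ INR n.+1 - / INR n.+2))); last first.
  by apply: ex_series_scal_l; exists 1; apply: telescope.
move=> n; change (Rabs (/ INR n.+1 ^ 2) <= 2 * (/ INR n.+1 - / INR n.+2)).
rewrite [INR n.+2]S_INR; have x_ge1 : 1 <= INR n.+1 by rewrite S_INR; have := pos_INR n; lra.
set x := INR n.+1 in x_ge1 *.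
rewrite Rabs_pos_eq; last by apply/Rlt_le/Rinv_0_lt_compat; apply: pow_lt; lra.
apply: (Rmult_le_reg_r (x ^ 2 * (x + 1))); first by nra.
have -> : / x ^ 2 * (x ^ 2 * (x + 1)) = x + 1 by field; lra.
have -> : 2 * (/ x - / (x + 1)) * (x ^ 2 * (x + 1)) = 2 * x by field; lra.
lra.
Qed.

Lemma mult_density_pair_le b m n N : (0 < b)%N -> (0 < n <= m)%N ->
  0 <= mult_density m N * mult_density (m ^ b) N <= / INR n ^ 2.
Proof.
move=> b_gt0 /andP [n_gt0 le_nm]; have m_gt0 : (0 < m)%N by apply: leq_trans le_nm.
have mb_gt0 : (0 < m ^ b)%N by rewrite expn_gt0 m_gt0.
have [d1_ge0 d1_le] := mult_density_bounds N m_gt0.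
have [d2_ge0 d2_le] := mult_density_bounds N mb_gt0.
have n_pos : 0 < INR n by apply/lt_0_INR/ltP.
have le_nm' : INR n <= INR m by apply/le_INR/leP.
have le_mmb : INR m <= INR (m ^ b) by apply/le_INR/leP; rewrite -{1}(expn1 m) leq_pexp2l.
have inv_m := Rinv_le_contravar _ _ n_pos le_nm'.
have inv_mb := Rinv_le_contravar _ _ n_pos (Rle_trans _ _ _ le_nm' le_mmb).
rewrite -pow_inv; split; first exact: Rmult_le_pos.
by have := Rinv_0_lt_compat _ n_pos; nra.
Qed.

Definition moebius_series (e : nat) : R := Series (fun n => moebius n.+1 / INR n.+1 ^ e).

Section GcdBDensity.
Variable b : nat.
Hypothesis b_gt0 : (0 < b)%N.

Lemma is_lim_seq_count_gcd_b k : (0 < k)%N ->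
  is_lim_seq (fun N => INR (count_gcd_b b k N) / INR N ^ 2)
             (moebius_series (b + 1) / INR k ^ (b + 1)).
Proof.
move=> k_gt0; have k_pos : 0 < INR k by apply: lt_0_INR; apply/ltP.
pose f N n := moebius n.+1 * (mult_density (k * n.+1) N * mult_density ((k * n.+1) ^ b) N).
apply: (is_lim_seq_ext (fun N => psum (f N) N)).
  move=> N; rewrite count_gcd_b_moebius // big_iota1_psum /psum /Rdiv big_distrl.
  apply: eq_bigr => n _; rewrite /f /mult_density /Rdiv /= Rmult_1_r Rinv_mult; ring.
have -> : moebius_series (b + 1) / INR k ^ (b + 1) =
    Series (fun n => moebius n.+1 * (/ INR (k * n.+1) * / INR ((k * n.+1) ^ b))).
  rewrite /moebius_series /Rdiv Rmult_comm -Series_scal_l; apply: Series_ext => n.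
  have n_pos : 0 < INR n.+1 by apply: lt_0_INR; lia.
  rewrite mult_INR -Nat_powE pow_INR mult_INR !pow_add Rpow_mult_distr.
  by field; repeat split; try apply: pow_nonzero; lra.
apply: (@tannery (fun n => / INR n.+1 ^ 2) _ _ f).
- by move=> n; apply: inv_INR_sq_ge0.
- exact: ex_series_inv_sq.
- move=> n; apply: is_lim_seq_mult' (is_lim_seq_const _) (is_lim_seq_mult' _ _ _ _ _ _);
    by apply: is_lim_seq_mult_density; rewrite ?expn_gt0 muln_gt0 k_gt0.
- move=> N n; rewrite /f Rabs_mult.
  have le_n_kn : (0 < n.+1 <= k * n.+1)%N by rewrite leq_pmull.
  have [d_ge0 d_le] := mult_density_pair_le N b_gt0 le_n_kn.
  rewrite (Rabs_pos_eq _ d_ge0); have := Rabs_moebius_le1 n.+1; have := Rabs_pos (moebius n.+1).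
  nra.
Qed.

Lemma count_gcd_b_density_le k N : (0 < k)%N ->
  Rabs (INR (count_gcd_b b k N) / INR N ^ 2) <= / INR k ^ 2.
Proof.
move=> k_gt0; have le_kk : (0 < k <= k)%N by rewrite k_gt0 leqnn.
have [_ density_le] := mult_density_pair_le N b_gt0 le_kk; apply: Rle_trans _ density_le.
have le_count := le_INR _ _ (elimT leP (count_gcd_b_le b N k_gt0)).
rewrite mult_INR in le_count.
rewrite Rabs_pos_eq; last exact: Rmult_le_pos (pos_INR _) (inv_INR_sq_ge0 N).
have -> : mult_density k N * mult_density (k ^ b) N =
          INR (N %/ k) * INR (N %/ k ^ b) / INR N ^ 2.
  by rewrite /mult_density /Rdiv /= Rmult_1_r Rinv_mult; ring.
exact: Rmult_le_compat_r (inv_INR_sq_ge0 N) le_count.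
Qed.

Lemma psum_count_gcd_b_density N : (0 < N)%N ->
  psum (fun n => INR (count_gcd_b b n.+1 N) / INR N ^ 2) N = 1.
Proof.
move=> N_gt0; have N_pos : 0 < INR N by apply/lt_0_INR/ltP.
rewrite /psum /Rdiv -big_distrl -/(psum (fun n => INR (count_gcd_b b n.+1 N)) N).
rewrite -(big_iota1_psum (fun k => INR (count_gcd_b b k N))) -INR_sum sum_count_gcd_b.
by rewrite mult_INR /=; field; lra.
Qed.

Lemma moebius_series_zeta :
  moebius_series (b + 1) * Series (fun n => / INR n.+1 ^ (b + 1)) = 1.
Proof.
pose g N n := INR (count_gcd_b b n.+1 N) / INR N ^ 2.
have lim_g : is_lim_seq (fun N => psum (g N) N)
               (Series (fun n => moebius_series (b + 1) * / INR n.+1 ^ (b + 1))).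
  apply: (@tannery (fun n => / INR n.+1 ^ 2) _ _ g).
  - by move=> n; apply: inv_INR_sq_ge0.
  - exact: ex_series_inv_sq.
  - by move=> n; exact: (is_lim_seq_count_gcd_b (ltn0Sn n)).
  - by move=> N n; apply: count_gcd_b_density_le.
have lim_one : is_lim_seq (fun N => psum (g N) N) 1.
  apply: (is_lim_seq_ext_loc (fun _ => 1)); last exact: is_lim_seq_const.
  by exists 1%N => N /leP N_gt0; rewrite psum_count_gcd_b_density.
rewrite -Series_scal_l; move: (is_lim_seq_unique _ _ lim_g).
by rewrite (is_lim_seq_unique _ _ lim_one) => -[].
Qed.
End GcdBDensity.

Theorem mainTheorem2 (b k : nat) (hb : lt 0 b) (hk : lt 0 k) :
  is_lim_seq
    (fun N : nat => INR (count_gcd_b b k N) / (INR N) ^ 2)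
    (1 / ((INR k) ^ (b + 1) * zeta (INR (b + 1)))).
Proof.
have b_gt0 : (0 < b)%N by apply/ltP.
have k_gt0 : (0 < k)%N by apply/ltP.
have zetaE : zeta (INR (b + 1)) = Series (fun n => / INR n.+1 ^ (b + 1)).
  by apply: Series_ext => n; rewrite Rpower_pow //; apply: lt_0_INR; lia.
have inv_zeta := moebius_series_zeta b_gt0; rewrite -zetaE in inv_zeta.
have zeta_neq0 : zeta (INR (b + 1)) <> 0 by move=> zeta0; rewrite zeta0 Rmult_0_r in inv_zeta; lra.
have k_pos : 0 < INR k by apply: lt_0_INR.
rewrite -inv_zeta; have -> : moebius_series (b + 1) * zeta (INR (b + 1)) /
    (INR k ^ (b + 1) * zeta (INR (b + 1))) = moebius_series (b + 1) / INR k ^ (b + 1).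
  by field; split => //; apply: pow_nonzero; lra.
exact: is_lim_seq_count_gcd_b.
Qed.
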